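(* Let $C=w_1-\dots-w_m$ be a chain with $m\ge 2$ edges and positive weights $w_1,\dots,w_m$. Then $$L_1(C)=\max\sum_{j=1}^{p+1}L_\emptyset(C_j),$$ where the maximum runs over all admissible decompositions $C=C_1-\dots-C_{p+1}$ of $C$ into subchains of at least two edges. In particular $C$ is extremal iff the trivial decomposition (with $p=0$, i.e. $C_1=C$) is the only admissible decomposition.
   Context: For a chain $C'=v_1-\dots-v_r$ ($r\ge 2$ edges, positive weights $v_i$): $L_1(C')=\max\{\sum_{i=1}^r v_ix_i : x\in\mathbb{R}^r,\ x_i^2+x_{i+1}^2\le 1\ \forall\,1\le i\le r-1\}$; $\Sigma_{\rm odd}(C')=\sum_{i\ \text{odd}}v_i$, $\Sigma_{\rm even}(C')=\sum_{i\ \text{even}}v_i$; the bare length is $L_\emptyset(C')=\sqrt{\Sigma_{\rm odd}(C')^2+\Sigma_{\rm even}(C')^2}$; $C'$ is extremal if $L_1(C')=L_\emptyset(C')$. A decomposition of $C=w_1-\dots-w_m$ into $p+1$ subchains is given by integers $0=i_0<i_1<\dots<i_p<i_{p+1}=m$, with $C_j=w_{i_{j-1}+1}-\dots-w_{i_j}$. For such a decomposition let $\tilde\Sigma_{\rm odd}(C_j)=\sum\{w_i : i_{j-1}<i\le i_j,\ i\text{ odd}\}$ and $\tilde\Sigma_{\rm even}(C_j)=\sum\{w_i : i_{j-1}<i\le i_j,\ i\text{ even}\}$ (parity taken with respect to the numbering in $C$), and for $1\le j\le p$ let $\Delta_j=\tilde\Sigma_{\rm even}(C_j)\tilde\Sigma_{\rm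 odd}(C_{j+1})-\tilde\Sigma_{\rm even}(C_{j+1})\tilde\Sigma_{\rm odd}(C_j)$. The decomposition is admissible if every $C_j$ has at least two edges and, for every $1\le j\le p$, $\Delta_j<0$ when $i_j$ is even and $\Delta_j>0$ when $i_j$ is odd (the trivial decomposition $p=0$ is admissible). *)

From HB Require Import structures.
From mathcomp Require Import all_boot all_order all_algebra.
From mathcomp Require Import classical_sets reals.
Set Implicit Arguments. Unset Strict Implicit. Unset Printing Implicit Defensive.
Import Order.TTheory GRing.Theory Num.Theory.
Local Open Scope ring_scope.
Local Open Scope classical_set_scope.

(* A chain v_1 - ... - v_r is given by a weight function v : nat -> R
   (only the values v 1, ..., v r matter) and its number of edges r. *)

Definition L1 (R : realType) (v : nat -> R) (r : nat) : R :=
  sup [set y : R | exists2 x : nat -> R,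
         (forall i : nat, (1 <= i < r)%N -> x i ^+ 2 + x i.+1 ^+ 2 <= 1) &
         y = \sum_(1 <= i < r.+1) v i * x i].

(* The subchain w_{a+1} - ... - w_b of C, with its own numbering k = i - a. *)
Definition sigma_odd_sub (R : realType) (w : nat -> R) (a b : nat) : R :=
  \sum_(a.+1 <= i < b.+1 | odd (i - a)) w i.
Definition sigma_even_sub (R : realType) (w : nat -> R) (a b : nat) : R :=
  \sum_(a.+1 <= i < b.+1 | ~~ odd (i - a)) w i.

Definition Lbare (R : realType) (w : nat -> R) (a b : nat) : R :=
  Num.sqrt (sigma_odd_sub w a b ^+ 2 + sigma_even_sub w a b ^+ 2).

(* Tilde sums: parity w.r.t. the numbering in C. *)
Definition tsigma_odd (R : realType) (w : nat -> R) (a b : nat) : R :=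
  \sum_(a.+1 <= i < b.+1 | odd i) w i.
Definition tsigma_even (R : realType) (w : nat -> R) (a b : nat) : R :=
  \sum_(a.+1 <= i < b.+1 | ~~ odd i) w i.

(* A decomposition of C = w_1 - ... - w_m into p+1 subchains is encoded by
   the list s = [:: i_1; ...; i_p] of cut points; the boundaries are
   bnds m s = [:: i_0 = 0; i_1; ...; i_p; i_{p+1} = m]. *)
Definition bnds (m : nat) (s : seq nat) : seq nat := 0%N :: rcons s m.

(* Delta_j, for 1 <= j <= p, with a = i_{j-1}, b = i_j, c = i_{j+1}. *)
Definition Delta (R : realType) (w : nat -> R) (a b c : nat) : R :=
  tsigma_even w a b * tsigma_odd w b c - tsigma_even w b c * tsigma_odd w a b.

Definition admissible (R : realType) (w : nat -> R) (m : nat) (s : seq nat) : Prop :=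
  path (fun a b => (a.+2 <= b)%N) 0%N (rcons s m) /\
  forall j : nat, (1 <= j <= size s)%N ->
    let t := bnds m s in
    let a := nth 0%N t j.-1 in
    let b := nth 0%N t j in
    let c := nth 0%N t j.+1 in
    if odd b then 0 < Delta w a b c else Delta w a b c < 0.

Definition decomp_length (R : realType) (w : nat -> R) (m : nat) (s : seq nat) : R :=
  \sum_(j < (size s).+1) Lbare w (nth 0%N (bnds m s) j) (nth 0%N (bnds m s) j.+1).

Definition extremal (R : realType) (v : nat -> R) (r : nat) : Prop :=
  L1 v r = Lbare v 0 r.

From HB Require Import structures.
From mathcomp Require Import all_boot all_order all_algebra.
From mathcomp Require Import classical_sets reals.
From mathcomp Require Import boolp topology normedtype derive matrix_normedtype.
From mathcomp Require Import ring lra zify.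
Set Implicit Arguments. Unset Strict Implicit. Unset Printing Implicit Defensive.
Import Order.TTheory GRing.Theory Num.Theory.
Import numFieldNormedType.Exports.

(* The supremum L_1 is attained (by compactness) at some y >= 0. Each y_i lies
   in a tight constraint y_k^2 + y_(k+1)^2 = 1, since otherwise y_i could be
   increased; hence cutting C at the slack constraints leaves subchains of at
   least two edges on which y alternates between values (u, v) with
   u^2 + v^2 = 1. By Cauchy-Schwarz such a subchain contributes at most its
   bare length, with equality iff (u, v) is its normalized vector
   (Σ_odd, Σ_even) / L_∅. Conversely, gluing the normalized vectors of
   the subchains of any decomposition gives a vector of value
   Σ_j L_∅(C_j), feasible exactly when the decomposition is admissible: the
   sign of Delta_j says that the constraint at the j-th cut is slack. Moving y
   slightly towards the glued vector of its own cuts shows that y already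
   equals it, so the slack cuts of y form an admissible decomposition of value
   L_1. A nontrivial admissible decomposition beats the trivial one strictly,
   by the equality case of Cauchy-Schwarz against the normalized vector of C. *)

(** * Cut sequences *)

Definition spaced (t : seq nat) :=
  forall j, j.+1 < size t -> (nth 0 t j).+2 <= nth 0 t j.+1.

Lemma spaced_bndsP m s :
  spaced (bnds m s) <-> path (fun a b => a.+2 <= b) 0 (rcons s m).
Proof.
split => [sp | /(pathP 0) h j].
- by apply/(pathP 0) => j; rewrite size_rcons => hj; apply: sp; rewrite /= size_rcons.
- by move=> hj; apply: h.
Qed.

Lemma size_bnds m s : size (bnds m s) = (size s).+2.
Proof. by rewrite /= size_rcons. Qed.

Lemma nth_bnds_last m s : nth 0 (bnds m s) (size s).+1 = m.
Proof. by rewrite /= nth_rcons ltnn eqxx. Qed.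

Lemma spaced_nth_mono t j j' :
  spaced t -> j <= j' -> j' < size t -> nth 0 t j <= nth 0 t j'.
Proof.
move=> sp; elim: j' => [|j' IH]; first by rewrite leqn0 => /eqP ->.
rewrite leq_eqVlt => /orP[/eqP -> //|]; rewrite ltnS => jj' hs.
have := sp j' hs; have := IH jj' (ltnW hs); lia.
Qed.

Lemma sorted_spaced t :
  sorted ltn t -> (forall k, k \in t -> k.+1 \notin t) -> spaced t.
Proof.
move=> st nc j hj; have tj : nth 0 t j \in t by rewrite mem_nth // ltnW.
have lt : nth 0 t j < nth 0 t j.+1.
  by apply: (sorted_ltn_nth ltn_trans 0 st); rewrite ?inE // ltnW.
case: (ltngtP (nth 0 t j).+1 (nth 0 t j.+1)) => // [|e]; first lia.
by move: (nc _ tj); rewrite e mem_nth.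
Qed.

Lemma nth_locate t i k : k < size t -> nth 0 t 0 < i <= nth 0 t k ->
  exists2 j, j < k & nth 0 t j < i <= nth 0 t j.+1.
Proof.
elim: k => [|k IH] hk; first lia.
move=> /andP[h1 h2]; case: (leqP i (nth 0 t k)) => hik; last by exists k; lia.
by have [|j jk hj] := IH (ltnW hk); [rewrite h1 hik | exists j => //; lia].
Qed.

Lemma path_leq_last a r : path leq a r -> a <= last a r.
Proof. by elim: r a => [|b r IH] a //= /andP[ab /IH]; apply: leq_trans. Qed.

Section Pieces.
Variables (m : nat) (s : seq nat).
Hypothesis sp : spaced (bnds m s).
Local Notation t j := (nth 0 (bnds m s) j).

Lemma bnds_le j : j < (size s).+2 -> t j <= m.
Proof.
move=> hj; rewrite -[X in _ <= X](nth_bnds_last m s).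
by apply: spaced_nth_mono; rewrite ?size_bnds // -ltnS.
Qed.

Lemma piece_bounds j : j < (size s).+1 -> (t j).+2 <= t j.+1 <= m.
Proof. by move=> hj; rewrite sp ?size_bnds ?bnds_le. Qed.

Lemma piece_of i : 0 < i <= m ->
  exists2 j, j < (size s).+1 & t j < i <= t j.+1.
Proof. by move=> hi; apply: nth_locate; rewrite ?size_bnds ?nth_bnds_last. Qed.

Lemma piece_uniq i j j' : j < (size s).+1 -> j' < (size s).+1 ->
  t j < i <= t j.+1 -> t j' < i <= t j'.+1 -> j = j'.
Proof.
move=> hj hj' hi hi'; case: (ltngtP j j') => // hlt.
- by have := spaced_nth_mono sp hlt; rewrite size_bnds => /(_ (ltnW hj')); lia.
- by have := spaced_nth_mono sp hlt; rewrite size_bnds => /(_ (ltnW hj)); lia.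
Qed.

Lemma notin_bnds j k : j < (size s).+1 -> t j < k < t j.+1 -> k \notin bnds m s.
Proof.
move=> hj hk; apply/negP => /(nthP 0) [j' hj' ek].
have [hle|hlt] := leqP j' j.
- by have := spaced_nth_mono sp hle; rewrite size_bnds ek => /(_ (ltnW hj)); lia.
- by have := spaced_nth_mono sp hlt hj'; rewrite ek; lia.
Qed.

Lemma spaced_path_leq : path leq 0 (rcons s m).
Proof.
apply/(pathP 0) => j; rewrite size_rcons => hj.
by have := sp (j := j); rewrite size_bnds => /(_ hj) /ltnW /ltnW.
Qed.

End Pieces.

Local Open Scope ring_scope.

Lemma big_nat_path (V : nmodType) (F : nat -> V) a r : path leq a r ->
  \sum_(a.+1 <= i < (last a r).+1) F i =
  \sum_(j < size r) \sum_((nth 0 (a :: r) j).+1 <= i < (nth 0 (a :: r) j.+1).+1) F i.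
Proof.
elim: r a => [|b r IH] a /=; first by rewrite big_ord0 big_geq.
move=> /andP[ab pr]; rewrite big_ord_recl -IH //= (big_cat_nat _ (n := b.+1)) //.
by rewrite ltnS path_leq_last.
Qed.

Lemma big_pieces (V : nmodType) (P : pred nat) (F : nat -> V) m s :
  spaced (bnds m s) ->
  \sum_(1 <= i < m.+1 | P i) F i =
  \sum_(j < (size s).+1)
     \sum_((nth 0%N (bnds m s) j).+1 <= i < (nth 0%N (bnds m s) j.+1).+1 | P i) F i.
Proof.
move=> sp; rewrite big_mkcond.
have := big_nat_path (fun i => if P i then F i else 0) (spaced_path_leq sp).
by rewrite last_rcons size_rcons => ->; apply: eq_bigr => j _; rewrite -big_mkcond.
Qed.

Section RealDomainFacts.
Variable R : realDomainType.

Lemma sqr_convex2 (a b c d tau : R) : 0 <= tau <= 1 ->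
  ((1 - tau) * a + tau * b) ^+ 2 + ((1 - tau) * c + tau * d) ^+ 2 <=
  (1 - tau) * (a ^+ 2 + c ^+ 2) + tau * (b ^+ 2 + d ^+ 2).
Proof.
move=> /andP[t0 t1]; rewrite -subr_ge0.
have -> : (1 - tau) * (a ^+ 2 + c ^+ 2) + tau * (b ^+ 2 + d ^+ 2) -
    (((1 - tau) * a + tau * b) ^+ 2 + ((1 - tau) * c + tau * d) ^+ 2) =
  tau * (1 - tau) * ((a - b) ^+ 2 + (c - d) ^+ 2) by ring.
by rewrite mulr_ge0 ?addr_ge0 ?sqr_ge0 // mulr_ge0 // subr_ge0.
Qed.

Lemma exists_pos_lower_bound (T : eqType) (r : seq T) (F : T -> R) :
  (forall k, k \in r -> 0 < F k) ->
  exists2 tau, 0 < tau <= 1 & forall k, k \in r -> tau <= F k.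
Proof.
elim: r => [|a r IH] hF; first by exists 1; rewrite ?ltr01 ?lexx.
have [|tau /andP[t0 t1] ht] := IH; first by move=> k kr; apply: hF; rewrite inE kr orbT.
have Fa : 0 < F a by apply: hF; rewrite mem_head.
exists (Num.min (F a) tau); first by rewrite lt_min Fa t0 ge_min t1 orbT.
move=> k; rewrite inE => /orP[/eqP-> | /ht kt]; first by rewrite ge_min lexx.
by rewrite ge_min kt orbT.
Qed.

Lemma ler_sum_eq (I : finType) (F G : I -> R) :
  (forall i, F i <= G i) -> \sum_i G i <= \sum_i F i -> forall i, F i = G i.
Proof.
move=> FG GF i; apply/eqP; rewrite eq_sym -subr_eq0; apply/eqP.
have gap0 : \sum_k (G k - F k) = 0.
  apply/eqP; rewrite eq_le sumr_ge0 ?andbT => [|k _]; last by rewrite subr_ge0.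
  by rewrite sumrB subr_le0.
by apply: (psumr_eq0P _ gap0) => // k _; rewrite subr_ge0.
Qed.

End RealDomainFacts.

Local Notation norm2 a b := (Num.sqrt (a ^+ 2 + b ^+ 2)).

Section Plane.
Variable R : rcfType.
Implicit Types a b p q : R.

Lemma sqr_norm2 a b : norm2 a b ^+ 2 = a ^+ 2 + b ^+ 2.
Proof. by rewrite sqr_sqrtr // addr_ge0 ?sqr_ge0. Qed.

Lemma dot_le_norm2 a b u1 u2 : u1 ^+ 2 + u2 ^+ 2 = 1 -> a * u1 + b * u2 <= norm2 a b.
Proof.
move=> hu; have n0 : 0 <= norm2 a b := sqrtr_ge0 _.
have : (a * u1 + b * u2) ^+ 2 <= norm2 a b ^+ 2.
  rewrite sqr_norm2 -[X in _ <= X]mulr1 -hu -subr_ge0.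
  have -> : (a ^+ 2 + b ^+ 2) * (u1 ^+ 2 + u2 ^+ 2) - (a * u1 + b * u2) ^+ 2 =
    (a * u2 - b * u1) ^+ 2 by ring.
  exact: sqr_ge0.
nra.
Qed.

Lemma dot_eq_norm2 a b u1 u2 : u1 ^+ 2 + u2 ^+ 2 = 1 -> 0 < norm2 a b ->
  a * u1 + b * u2 = norm2 a b -> u1 = a / norm2 a b /\ u2 = b / norm2 a b.
Proof.
move=> hu; set n := norm2 a b => n0 he.
have : (u1 * n - a) ^+ 2 + (u2 * n - b) ^+ 2 == 0.
  have -> : (u1 * n - a) ^+ 2 + (u2 * n - b) ^+ 2 =
    n ^+ 2 * (u1 ^+ 2 + u2 ^+ 2) - 2 * n * (a * u1 + b * u2) + (a ^+ 2 + b ^+ 2) by ring.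
  by rewrite hu he -sqr_norm2 -/n; apply/eqP; ring.
rewrite paddr_eq0 ?sqr_ge0 // !sqrf_eq0 !subr_eq0 => /andP[/eqP e1 /eqP e2].
by rewrite -e1 -e2 !mulfK ?gt_eqF.
Qed.

Lemma normalized_unit a b : 0 < norm2 a b ->
  (a / norm2 a b) ^+ 2 + (b / norm2 a b) ^+ 2 = 1.
Proof.
have := sqr_norm2 a b; set n := norm2 a b => e n0.
by rewrite !expr_div_n -mulrDl -e divff // expf_neq0 ?gt_eqF.
Qed.

Lemma normalized_dot a b : 0 < norm2 a b -> a * (a / norm2 a b) + b * (b / norm2 a b) = norm2 a b.
Proof.
have := sqr_norm2 a b; set n := norm2 a b => e n0.
by rewrite !mulrA -mulrDl -!expr2 -e expr2 mulfK ?gt_eqF.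
Qed.

Lemma normalized_sqr_add_lt1 X Y p q : 0 < X -> 0 < Y -> 0 < p -> 0 < q ->
  (X / norm2 X Y) ^+ 2 + (p / norm2 p q) ^+ 2 < 1 <-> X * p < Y * q.
Proof.
move=> X0 Y0 p0 q0; rewrite !expr_div_n !sqr_norm2.
have A0 : 0 < X ^+ 2 + Y ^+ 2 by nra.
have B0 : 0 < p ^+ 2 + q ^+ 2 by nra.
have -> : X ^+ 2 / (X ^+ 2 + Y ^+ 2) + p ^+ 2 / (p ^+ 2 + q ^+ 2) =
  (X ^+ 2 * (p ^+ 2 + q ^+ 2) + p ^+ 2 * (X ^+ 2 + Y ^+ 2)) /
  ((X ^+ 2 + Y ^+ 2) * (p ^+ 2 + q ^+ 2)).
  by field; rewrite !gt_eqF.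
rewrite ltr_pdivrMr ?mulr_gt0 // mul1r -(ltr_pXn2r (n := 2)) ?nnegrE ?ltW ?mulr_gt0 //.
by split=> h; lra.
Qed.

End Plane.

(** * Glued normalized vectors *)

Section Chain.
Variables (R : realType) (w : nat -> R) (m : nat).
Hypothesis hm : (2 <= m)%N.
Hypothesis hw : forall i, (1 <= i <= m)%N -> 0 < w i.

Definition feasible (x : nat -> R) :=
  forall i, (1 <= i < m)%N -> x i ^+ 2 + x i.+1 ^+ 2 <= 1.

Definition chain_value (x : nat -> R) := \sum_(1 <= i < m.+1) w i * x i.

Lemma feasible_sqr_le1 x i : feasible x -> (1 <= i <= m)%N -> x i ^+ 2 <= 1.
Proof.
move=> fx hi; have [him|him] := ltnP i m.
- have /fx : (1 <= i < m)%N by lia.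
  by have := sqr_ge0 (x i.+1); lra.
- have /fx : (1 <= m.-1 < m)%N by lia.
  have -> : m.-1.+1 = i by lia.
  by have := sqr_ge0 (x m.-1); lra.
Qed.

Lemma chain_value_le_L1 x : feasible x -> chain_value x <= L1 w m.
Proof.
move=> fx; apply: ub_le_sup; last by exists x.
exists (\sum_(1 <= i < m.+1) w i) => _ [z fz ->].
rewrite big_nat_cond [leRHS]big_nat_cond; apply: ler_sum => i /andP[hi _].
have hi' : (1 <= i <= m)%N by lia.
have := feasible_sqr_le1 fz hi'; have := hw hi' => w0 z1.
by rewrite ler_piMr ?(ltW w0) //; nra.
Qed.

Lemma L1_le_ub M : (forall x, feasible x -> chain_value x <= M) -> L1 w m <= M.
Proof.
move=> h; apply: ge_sup; last by move=> _ [x fx ->]; apply: h.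
by exists (chain_value (fun=> 0)), (fun=> 0) => // i _; rewrite expr0n /= addr0 ler01.
Qed.

Lemma L1_maximizer y : feasible y ->
  (forall x, feasible x -> chain_value x <= chain_value y) -> L1 w m = chain_value y.
Proof.
by move=> fy my; apply/le_anti; rewrite L1_le_ub ?chain_value_le_L1.
Qed.

Lemma Lbare_tsigma a b : Lbare w a b = norm2 (tsigma_odd w a b) (tsigma_even w a b).
Proof.
have sub_odd i : (a < i)%N -> odd (i - a) = odd i (+) odd a by move=> ai; rewrite oddB // ltnW.
rewrite /Lbare /sigma_odd_sub /sigma_even_sub /tsigma_odd /tsigma_even.
case ha: (odd a); [rewrite addrC|]; congr (Num.sqrt (_ ^+ 2 + _ ^+ 2));
  rewrite big_nat_cond [RHS]big_nat_cond; apply: eq_bigl => i;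
  case: (boolP (a.+1 <= i < b.+1)%N) => //= /andP[ai _];
  by rewrite sub_odd // ha ?addbT ?addbF ?negbK.
Qed.

Lemma sum_weights_gt0 (P : pred nat) a b k : (b <= m)%N -> (a < k <= b)%N -> P k ->
  0 < \sum_(a.+1 <= i < b.+1 | P i) w i.
Proof.
move=> bm hk Pk; have kin : k \in index_iota a.+1 b.+1 by rewrite mem_index_iota; lia.
rewrite big_mkcond (bigD1_seq k kin (iota_uniq _ _)) /= Pk ltr_pwDl ?hw //; first lia.
rewrite big_seq_cond; apply: sumr_ge0 => i /andP[]; rewrite mem_index_iota => hi _.
by case: ifP => // _; rewrite ltW ?hw //; lia.
Qed.

Lemma tsigma_gt0 a b : (a.+2 <= b)%N -> (b <= m)%N ->
  0 < tsigma_odd w a b /\ 0 < tsigma_even w a b.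
Proof.
move=> ab bm; rewrite /tsigma_odd /tsigma_even.
case ha: (odd a); split.
- by apply: (sum_weights_gt0 (k := a.+2)) => //=; rewrite ?ha //; lia.
- by apply: (sum_weights_gt0 (k := a.+1)) => //=; rewrite ?ha //; lia.
- by apply: (sum_weights_gt0 (k := a.+1)) => //=; rewrite ?ha //; lia.
- by apply: (sum_weights_gt0 (k := a.+2)) => //=; rewrite ?ha //; lia.
Qed.

Lemma Lbare_gt0 a b : (a.+2 <= b)%N -> (b <= m)%N -> 0 < Lbare w a b.
Proof.
move=> ab bm; have [o e] := tsigma_gt0 ab bm.
by rewrite Lbare_tsigma sqrtr_gt0 addr_gt0 ?exprn_gt0.
Qed.

Lemma sum_alternating a b (z : nat -> R) (al be : R) :
  (forall i, (a < i <= b)%N -> z i = if odd i then al else be) ->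
  \sum_(a.+1 <= i < b.+1) w i * z i = tsigma_odd w a b * al + tsigma_even w a b * be.
Proof.
move=> hz; rewrite (bigID odd) /= /tsigma_odd /tsigma_even !mulr_suml.
by congr (_ + _); rewrite big_nat_cond [RHS]big_nat_cond; apply: eq_bigr => i
  /andP[/andP[i1 i2] hp]; rewrite hz ?(negbTE hp) ?hp //; lia.
Qed.

(* Parity is taken in the numbering of C, hence the tilde sums; by
   [Lbare_tsigma] this does not affect the bare length. *)
Definition piece_vec a b i : R :=
  (if odd i then tsigma_odd w a b else tsigma_even w a b) / Lbare w a b.

Lemma piece_vec_unit a b i : (a.+2 <= b)%N -> (b <= m)%N ->
  piece_vec a b i ^+ 2 + piece_vec a b i.+1 ^+ 2 = 1.
Proof.
move=> ab bm; have := Lbare_gt0 ab bm; rewrite /piece_vec oddS Lbare_tsigma => L0.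
by case: (odd i) => /=; last rewrite addrC; apply: normalized_unit.
Qed.

Lemma piece_vec_value a b : (a.+2 <= b)%N -> (b <= m)%N ->
  \sum_(a.+1 <= i < b.+1) w i * piece_vec a b i = Lbare w a b.
Proof.
move=> ab bm; have := Lbare_gt0 ab bm; rewrite Lbare_tsigma => L0.
rewrite (@sum_alternating _ _ _ (tsigma_odd w a b / Lbare w a b) (tsigma_even w a b / Lbare w a b)).
  by rewrite Lbare_tsigma normalized_dot.
by move=> i _; rewrite /piece_vec; case: odd.
Qed.

Lemma piece_vec_boundary a b c : (a.+2 <= b)%N -> (b.+2 <= c)%N -> (c <= m)%N ->
  piece_vec a b b ^+ 2 + piece_vec b c b.+1 ^+ 2 < 1 <->
  (if odd b then 0 < Delta w a b c else Delta w a b c < 0).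
Proof.
move=> ab bc cm; have bm : (b <= m)%N by lia.
have [o1 e1] := tsigma_gt0 ab bm; have [o2 e2] := tsigma_gt0 bc cm.
rewrite /piece_vec /Delta oddS !Lbare_tsigma; case: (odd b) => /=.
- by rewrite [tsigma_odd w b c ^+ 2 + _]addrC normalized_sqr_add_lt1 //; split=> h; lra.
- by rewrite [tsigma_odd w a b ^+ 2 + _]addrC normalized_sqr_add_lt1 //; split=> h; lra.
Qed.

Section Glued.
Variable s : seq nat.
Hypothesis sp : spaced (bnds m s).
Local Notation t j := (nth 0%N (bnds m s) j).

Definition glued i : R :=
  \sum_(j < (size s).+1) if (t j < i <= t j.+1)%N then piece_vec (t j) (t j.+1) i else 0.

Lemma glued_piece j i : (j < (size s).+1)%N -> (t j < i <= t j.+1)%N ->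
  glued i = piece_vec (t j) (t j.+1) i.
Proof.
move=> hj hi; rewrite /glued (bigD1 (Ordinal hj)) //= hi big1 ?addr0 // => k hk.
case: ifP => // hk'; case/eqP: hk; apply: val_inj.
exact: (piece_uniq sp (ltn_ord k) hj hk' hi).
Qed.

Lemma chain_value_glued : chain_value glued = decomp_length w m s.
Proof.
rewrite /chain_value (big_pieces _ _ sp); apply: eq_bigr => j _.
have /andP[h1 h2] := piece_bounds sp (ltn_ord j).
rewrite -(piece_vec_value h1 h2) big_nat_cond [RHS]big_nat_cond.
by apply: eq_bigr => i /andP[hi _]; rewrite (glued_piece (ltn_ord j)).
Qed.

Lemma glued_sqr_le1 i : (1 <= i <= m)%N -> glued i ^+ 2 <= 1.
Proof.
move=> hi; have [j hj hij] := piece_of s hi; have /andP[h1 h2] := piece_bounds sp hj.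
rewrite (glued_piece hj hij) -(piece_vec_unit i h1 h2).
by rewrite lerDl sqr_ge0.
Qed.

Lemma glued_unit_off_cuts k : (1 <= k < m)%N -> k \notin bnds m s ->
  glued k ^+ 2 + glued k.+1 ^+ 2 = 1.
Proof.
move=> hk kt; have /(piece_of s) [j hj hkj] : (0 < k <= m)%N by lia.
have /andP[h1 h2] := piece_bounds sp hj.
have kb : k != t j.+1 by apply: contraNneq kt => ->; rewrite mem_nth ?size_bnds.
rewrite (glued_piece hj hkj) (glued_piece (i := k.+1) hj); last lia.
exact: piece_vec_unit.
Qed.

Lemma glued_boundary j : (1 <= j <= size s)%N ->
  glued (t j) ^+ 2 + glued (t j).+1 ^+ 2 < 1 <->
  (if odd (t j) then 0 < Delta w (t j.-1) (t j) (t j.+1)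
   else Delta w (t j.-1) (t j) (t j.+1) < 0).
Proof.
case: j => // j /= hj.
have /andP[h1 h2] := piece_bounds sp (ltnW hj).
have /andP[h3 h4] := piece_bounds sp (j := j.+1) hj.
rewrite (glued_piece (ltnW hj) (i := t j.+1)); last lia.
rewrite (glued_piece (j := j.+1) hj (i := (t j.+1).+1)); last lia.
exact: piece_vec_boundary.
Qed.

Lemma glued_feasible :
  (forall j, (1 <= j <= size s)%N ->
    if odd (t j) then 0 < Delta w (t j.-1) (t j) (t j.+1)
    else Delta w (t j.-1) (t j) (t j.+1) < 0) ->
  feasible glued.
Proof.
move=> adm k hk; have /(piece_of s) [j hj hkj] : (0 < k <= m)%N by lia.
have /andP[h1 h2] := piece_bounds sp hj.
have [hkb|hkb] := ltnP k (t j.+1).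
  rewrite (glued_piece hj hkj) (glued_piece (i := k.+1) hj); last lia.
  by rewrite piece_vec_unit.
have ek : k = t j.+1 by lia.
have hjs : (j < size s)%N.
  rewrite ltn_neqAle -ltnS hj andbT; apply: contraTneq hk => ej.
  by rewrite ek ej nth_bnds_last ltnn andbF.
by rewrite ek ltW //; apply/glued_boundary; [lia | apply: adm; lia].
Qed.

End Glued.

Lemma decomp_length_le_L1 s : admissible w m s -> decomp_length w m s <= L1 w m.
Proof.
case=> /spaced_bndsP sp adm; rewrite -(chain_value_glued sp).
exact/chain_value_le_L1/(glued_feasible sp).
Qed.

Lemma Lbare_lt_decomp_length s : admissible w m s -> s != [::] ->
  Lbare w 0 m < decomp_length w m s.
Proof.
case=> /spaced_bndsP sp adm sne; set t := nth 0%N (bnds m s).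
set P := tsigma_odd w 0 m; set Q := tsigma_even w 0 m.
have L0 := Lbare_gt0 hm (leqnn m); rewrite Lbare_tsigma -/P -/Q in L0 *.
set L := norm2 P Q in L0 *.
pose Lj (j : 'I_(size s).+1) := Lbare w (t j) (t j.+1).
pose c (j : 'I_(size s).+1) :=
  tsigma_odd w (t j) (t j.+1) * (P / L) + tsigma_even w (t j) (t j.+1) * (Q / L).
have c_le j : c j <= Lj j by rewrite /Lj Lbare_tsigma dot_le_norm2 // normalized_unit.
have sum_c : \sum_j c j = L.
  rewrite big_split /= -!mulr_suml /P /Q /tsigma_odd /tsigma_even.
  by rewrite -!(big_pieces _ _ sp) normalized_dot.
(* Equality makes every piece proportional to (P, Q), and then Delta_1 = 0. *)
rewrite lt_neqAle -sum_c ler_sum // andbT; apply/negP => /eqP eqL.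
have c_eq : forall j, c j = Lj j.
  by apply: ler_sum_eq c_le _; rewrite eqL.
have piece_prop j : (j < (size s).+1)%N ->
    tsigma_odd w (t j) (t j.+1) = P / L * Lj (inord j) /\
    tsigma_even w (t j) (t j.+1) = Q / L * Lj (inord j).
  move=> hj; have /andP[h1 h2] := piece_bounds sp hj.
  have := Lbare_gt0 h1 h2; have := c_eq (inord j).
  rewrite /c /Lj inordK // Lbare_tsigma => e Lj0.
  have [-> ->] := dot_eq_norm2 (normalized_unit L0) Lj0 e.
  by rewrite !divfK ?gt_eqF.
have s0 : (0 < size s)%N by rewrite lt0n size_eq0.
have := adm 1%N s0; rewrite /Delta.
have [-> ->] := piece_prop 0%N isT; have [-> ->] := piece_prop 1%N s0.
have -> : forall a b : R, Q / L * a * (P / L * b) - Q / L * b * (P / L * a) = 0 by move=> a b; ring.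
by case: ifP; rewrite ltxx.
Qed.

Lemma feasible_norm x : feasible x -> feasible (fun k => `|x k|).
Proof. by move=> fx i hi; rewrite !real_normK ?num_real //; apply: fx. Qed.

Lemma chain_value_le_norm x : chain_value x <= chain_value (fun k => `|x k|).
Proof.
rewrite /chain_value big_nat_cond [leRHS]big_nat_cond; apply: ler_sum => i /andP[hi _].
by rewrite ler_wpM2l ?ler_norm // ltW ?hw //; lia.
Qed.

(** * Structure of a nonnegative maximizer *)

Section Optimum.
Variable y : nat -> R.
Hypothesis fy : feasible y.
Hypothesis my : forall x, feasible x -> chain_value x <= chain_value y.
Hypothesis y_ge0 : forall k, 0 <= y k.

Definition tight k := y k ^+ 2 + y k.+1 ^+ 2 == 1.

Lemma slack_lt k : (1 <= k < m)%N -> ~~ tight k -> y k ^+ 2 + y k.+1 ^+ 2 < 1.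
Proof. by move=> hk nt; rewrite lt_neqAle nt fy. Qed.

Lemma no_increase i d : (1 <= i <= m)%N -> 0 < d ->
  ((1 < i)%N -> y i.-1 ^+ 2 + y i ^+ 2 + d <= 1) ->
  ((i < m)%N -> y i ^+ 2 + y i.+1 ^+ 2 + d <= 1) -> False.
Proof.
move=> hi d0 hl hr.
pose z k := if k == i then Num.sqrt (y i ^+ 2 + d) else y k.
have zE k : k != i -> z k = y k by rewrite /z => /negbTE ->.
have zi : z i ^+ 2 = y i ^+ 2 + d.
  by rewrite /z eqxx sqr_sqrtr // addr_ge0 ?sqr_ge0 ?ltW.
have fz : feasible z.
  move=> k hk; case: (eqVneq k i) => [ki | ki].
    have /hr : (i < m)%N by lia.
    by rewrite ki zi zE; [lra | apply/eqP; lia].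
  case: (eqVneq k.+1 i) => [k1i | k1i]; last by rewrite !zE //; apply: fy.
  have /hl : (1 < i)%N by lia.
  by rewrite k1i zi zE // (_ : k = i.-1); [lra | lia].
have zy : y i < z i.
  rewrite -(ltr_pXn2r (n := 2)) ?nnegrE ?y_ge0 ?zi ?ltrDl //.
  by rewrite /z eqxx sqrtr_ge0.
have iin : i \in index_iota 1 m.+1 by rewrite mem_index_iota; lia.
have := my fz; apply/negP; rewrite -ltNge -subr_gt0 /chain_value -sumrB.
rewrite (bigD1_seq i iin (iota_uniq _ _)) /= big1 => [|k ki]; last by rewrite zE // subrr.
by rewrite addr0 -mulrBr mulr_gt0 ?hw ?subr_gt0 //; lia.
Qed.

Lemma tight_cover i : (1 <= i <= m)%N ->
  ((1 < i)%N && tight i.-1) || ((i < m)%N && tight i).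
Proof.
move=> hi; apply/negPn/negP; rewrite negb_or !negb_and => /andP[hl hr].
pose r := [seq k <- [:: i.-1; i] | (1 <= k < m)%N].
have [|d /andP[d0 _] hd] := exists_pos_lower_bound (r := r)
    (F := fun k => 1 - (y k ^+ 2 + y k.+1 ^+ 2)).
  move=> k; rewrite mem_filter => /andP[hk kin]; rewrite subr_gt0 slack_lt //.
  move: kin; rewrite !inE => /orP[] /eqP ek.
  - have li : (1 < i)%N by lia.
    by move: hl; rewrite li -ek.
  - have im : (i < m)%N by lia.
    by move: hr; rewrite im -ek.
apply: (no_increase hi d0) => [li | im].
- have /hd : i.-1 \in r by rewrite mem_filter mem_head andbT; lia.
  by rewrite (prednK (ltnW li)); lra.
- have /hd : i \in r by rewrite mem_filter !inE eqxx orbT andbT; lia.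
  lra.
Qed.

Definition slack_cuts := [seq k <- iota 1 m.-1 | ~~ tight k].

Lemma mem_slack_cuts k : (k \in slack_cuts) = (1 <= k < m)%N && ~~ tight k.
Proof. by rewrite mem_filter mem_iota andbC add1n prednK // ltnW. Qed.

Lemma mem_bnds_slack k :
  (k \in bnds m slack_cuts) = [|| k == 0%N, k == m | (1 <= k < m)%N && ~~ tight k].
Proof. by rewrite inE mem_rcons inE mem_slack_cuts. Qed.

Lemma slack_cuts_spaced : spaced (bnds m slack_cuts).
Proof.
apply: sorted_spaced => [|k hk].
  have cs : sorted ltn slack_cuts := sorted_filter ltn_trans _ (iota_ltn_sorted 1 m.-1).
  rewrite /= rcons_path (path_sortedE ltn_trans) cs andbT; apply/andP; split.
    by apply/allP => k; rewrite mem_slack_cuts => /andP[hk _]; lia.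
  have := mem_last 0%N slack_cuts; rewrite inE mem_slack_cuts.
  by case/orP => [/eqP -> | /andP[/andP[_ hk] _]]; [exact: ltnW | exact: hk].
apply/negP => hk1.
have k1m : (k.+1 <= m)%N.
  by move: hk1; rewrite mem_bnds_slack => /or3P[/eqP // | /eqP -> // | /andP[/andP[_ /ltnW h]]].
have : (1 <= k.+1 <= m)%N by rewrite k1m.
move/tight_cover; case/orP => [/andP[k0 tk] | /andP[km tk1]].
- by move: hk; rewrite mem_bnds_slack tk /= andbF orbF => /orP[/eqP ek | /eqP ek]; lia.
- by move: hk1; rewrite mem_bnds_slack tk1 /= andbF orbF => /eqP ek; lia.
Qed.

Local Notation t j := (nth 0%N (bnds m slack_cuts) j).

Lemma tight_inside_piece j k : (j < (size slack_cuts).+1)%N -> (t j < k < t j.+1)%N -> tight k.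
Proof.
move=> hj hk; have /andP[_ hb] := piece_bounds slack_cuts_spaced hj.
have := notin_bnds slack_cuts_spaced hj hk.
by rewrite mem_bnds_slack !negb_or negb_and negbK => /and3P[_ _ /orP[] //]; lia.
Qed.

Lemma tight_step i : tight i -> tight i.+1 -> y i.+2 = y i.
Proof.
rewrite /tight => /eqP h1 /eqP h2; apply/eqP.
by rewrite -(eqrXn2 (n := 2)) ?y_ge0 //; apply/eqP; lra.
Qed.

Lemma piece_alternates j : (j < (size slack_cuts).+1)%N ->
  exists al be, al ^+ 2 + be ^+ 2 = 1 /\
    forall i, (t j < i <= t j.+1)%N -> y i = if odd i then al else be.
Proof.
move=> hj; set a := t j; set b := t j.+1.
have /andP[ab _] := piece_bounds slack_cuts_spaced hj.
have tight_in k : (a < k < b)%N -> tight k := tight_inside_piece hj.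
have ta : y a.+1 ^+ 2 + y a.+2 ^+ 2 = 1 by apply/eqP/tight_in; lia.
exists (if odd a.+1 then y a.+1 else y a.+2), (if odd a.+1 then y a.+2 else y a.+1).
split; first by case: odd; rewrite // addrC.
elim/ltn_ind => i IH hi; have [le2|gt2] := leqP i a.+2.
  have [->|->] : i = a.+1 \/ i = a.+2 by lia.
    by case: odd.
  by rewrite oddS; case: odd.
have [i' ei] : exists i', i = i'.+2 by exists i.-2; lia.
have /andP[t1 t2] : tight i' && tight i'.+1 by rewrite !tight_in //; lia.
by rewrite ei tight_step // IH /= ?negbK //; lia.
Qed.

Lemma piece_value_le j : (j < (size slack_cuts).+1)%N ->
  \sum_((t j).+1 <= i < (t j.+1).+1) w i * y i <= Lbare w (t j) (t j.+1).
Proof.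
move=> hj; have [al [be [u hy]]] := piece_alternates hj.
by rewrite (sum_alternating hy) Lbare_tsigma dot_le_norm2.
Qed.

Lemma chain_value_glued_le : chain_value (glued slack_cuts) <= chain_value y.
Proof.
set x := glued slack_cuts; have sp := slack_cuts_spaced.
have [|tau /andP[t0 t1] ht] := exists_pos_lower_bound (r := slack_cuts)
    (F := fun k => (1 - (y k ^+ 2 + y k.+1 ^+ 2)) / 2).
  by move=> k; rewrite mem_slack_cuts => /andP[hk /(slack_lt hk) ?]; rewrite divr_gt0 ?subr_gt0.
(* Slack constraints leave room for a small step towards x, and off the cuts
   x is tight like y. *)
pose z k := (1 - tau) * y k + tau * x k.
have fz : feasible z.
  move=> k hk; have tt : 0 <= tau <= 1 by rewrite ltW.
  apply: le_trans (sqr_convex2 (y k) (x k) (y k.+1) (x k.+1) tt) _.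
  have xk : x k ^+ 2 + x k.+1 ^+ 2 <= 2.
    by rewrite [2]mulr2n lerD // glued_sqr_le1 //; lia.
  have [kc|kc] := boolP (k \in slack_cuts).
    have := ht k kc; have := sqr_ge0 (y k); have := sqr_ge0 (y k.+1); nra.
  have tk : tight k by move: kc; rewrite mem_slack_cuts hk negbK.
  have {}xk : x k ^+ 2 + x k.+1 ^+ 2 = 1.
    apply: (glued_unit_off_cuts sp hk); rewrite mem_bnds_slack tk /= andbF orbF negb_or.
    by apply/andP; split; apply/eqP; lia.
  by rewrite (eqP tk) xk; lra.
have Vz : chain_value z = (1 - tau) * chain_value y + tau * chain_value x.
  by rewrite /chain_value !mulr_sumr -big_split /=; apply: eq_bigr => i _; rewrite /z; ring.
have : tau * (chain_value x - chain_value y) <= 0 by have := my fz; rewrite Vz; lra.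
by rewrite pmulr_rle0 // subr_le0.
Qed.

Lemma piece_value_optimal j : (j < (size slack_cuts).+1)%N ->
  \sum_((t j).+1 <= i < (t j.+1).+1) w i * y i = Lbare w (t j) (t j.+1).
Proof.
move=> hj; have sp := slack_cuts_spaced.
pose F (k : 'I_(size slack_cuts).+1) := \sum_((t k).+1 <= i < (t k.+1).+1) w i * y i.
pose G (k : 'I_(size slack_cuts).+1) := Lbare w (t k) (t k.+1).
apply: (@ler_sum_eq _ _ F G (fun k => piece_value_le (ltn_ord k)) _ (Ordinal hj)).
rewrite -(big_pieces _ _ sp); change (decomp_length w m slack_cuts <= chain_value y).
by rewrite -(chain_value_glued sp) chain_value_glued_le.
Qed.

Lemma chain_value_slack_cuts : chain_value y = decomp_length w m slack_cuts.
Proof.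
rewrite /chain_value (big_pieces _ _ slack_cuts_spaced).
by apply: eq_bigr => j _; rewrite piece_value_optimal.
Qed.

Lemma maximizer_eq_glued i : (1 <= i <= m)%N -> y i = glued slack_cuts i.
Proof.
move=> hi; have sp := slack_cuts_spaced; have [j hj hij] := piece_of slack_cuts hi.
have [al [be [u hy]]] := piece_alternates hj.
have /andP[h1 h2] := piece_bounds sp hj.
have := piece_value_optimal hj; rewrite (sum_alternating hy) Lbare_tsigma => e.
have := Lbare_gt0 h1 h2; rewrite Lbare_tsigma => L0.
rewrite hy // (glued_piece sp hj hij) /piece_vec Lbare_tsigma.
by have [-> ->] := dot_eq_norm2 u L0 e; case: odd.
Qed.

Lemma slack_cuts_admissible : admissible w m slack_cuts.
Proof.
have sp := slack_cuts_spaced; split; first exact/spaced_bndsP.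
move=> j hj /=; apply/(glued_boundary sp hj).
have : t j \in slack_cuts by case: j hj => // j /andP[_ hj]; rewrite /= nth_rcons hj mem_nth.
rewrite mem_slack_cuts => /andP[hb nt].
by have := slack_lt hb nt; rewrite !maximizer_eq_glued //; lia.
Qed.

End Optimum.

End Chain.

(** * Existence of a maximizer *)

Lemma continuous_big_sum (T : topologicalType) (K : numFieldType) (I : Type)
    (r : seq I) (F : I -> T -> K) :
  (forall i, continuous (F i)) -> continuous (fun x => \sum_(i <- r) F i x).
Proof.
move=> cF; elim: r => [|a r IH].
  by under eq_fun do rewrite big_nil; apply: cst_continuous.
by under eq_fun do rewrite big_cons; move=> x; apply: continuousD; [apply: cF | apply: IH].
Qed.

Lemma continuous_sqr (T : topologicalType) (K : numFieldType) (f : T -> K) :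
  continuous f -> continuous (fun x => f x ^+ 2).
Proof.
move=> cf; rewrite (_ : (fun x => _) = f \* f); last by apply/funext => x; rewrite expr2.
by move=> x; apply: continuousM; apply: cf.
Qed.

Section Maximizer.
Variables (R : realType) (w : nat -> R) (n : nat).
Hypothesis hn : (0 < n)%N.
Local Open Scope classical_set_scope.

Definition coords (v : 'rV[R]_n.+1) (k : nat) : R := v ord0 (inord k.-1).

Lemma continuous_coords k : continuous (fun v : 'rV[R]_n.+1 => coords v k).
Proof. by move=> v; apply: coord_continuous. Qed.

Lemma closed_feasible : closed [set v : 'rV[R]_n.+1 | feasible n.+1 (coords v)].
Proof.
pose g k v := coords v k ^+ 2 + coords v k.+1 ^+ 2.
rewrite (_ : [set v | _] = \bigcap_(k in [set k | (1 <= k < n.+1)%N]) (g k @^-1` [set r | r <= 1])).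
  apply: closed_bigI => k _; apply: (continuous_closedP (g k)).1; last exact: closed_le.
  move=> v; apply: (continuousD (f := fun v => coords v k ^+ 2) (g := fun v => coords v k.+1 ^+ 2));
  by apply: continuous_sqr; apply: continuous_coords.
by apply/seteqP; split => v /= h k /h.
Qed.

Lemma exists_maximizer : exists2 x, feasible n.+1 x &
  forall z, feasible n.+1 z -> chain_value w n.+1 z <= chain_value w n.+1 x.
Proof.
have hm : (2 <= n.+1)%N := hn.
pose B := [set v : 'rV[R]_n.+1 | forall i, `[(-1 : R), 1] (v ord0 i)].
pose C := [set v : 'rV[R]_n.+1 | feasible n.+1 (coords v)].
pose f v := chain_value w n.+1 (coords v).
pose row_of (x : nat -> R) := \row_(i < n.+1) x i.+1.
have coords_row x k : (1 <= k <= n.+1)%N -> coords (row_of x) k = x k.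
  by move=> hk; rewrite /coords /row_of mxE inordK ?prednK //; lia.
have f_row x : f (row_of x) = chain_value w n.+1 x.
  rewrite /f /chain_value big_nat_cond [RHS]big_nat_cond.
  by apply: eq_bigr => i /andP[hi _]; rewrite coords_row //; lia.
have BC_row x : feasible n.+1 x -> (B `&` C) (row_of x).
  move=> fx; split=> [i | k hk].
    have hi : (1 <= i.+1 <= n.+1)%N by rewrite ltn_ord.
    have := feasible_sqr_le1 hm fx hi; rewrite /= mxE in_itv /= => x1.
    by apply/andP; split; nra.
  by rewrite /C /= !coords_row; [apply: fx | lia | lia].
have cBC : compact (B `&` C).
  apply: compact_closedI; last exact: closed_feasible.
  by apply: (@rV_compact _ _ (fun=> `[(-1 : R), 1])) => i; apply: segment_compact.
have BC0 : B `&` C !=set0.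
  by exists (row_of (fun=> 0)); apply: BC_row => i _; rewrite expr0n /= addr0 ler01.
have cf : {within B `&` C, continuous f}.
  apply: continuous_subspaceT; apply: continuous_big_sum => i v.
  apply: (continuousM (s := fun=> w i) (t := fun v => coords v i)).
    exact: cst_continuous.
  exact: continuous_coords.
have [c /set_mem[_ Cc] cmax] := EVT_max_rV BC0 cBC cf.
exists (coords c) => // z fz.
by rewrite -f_row; apply: cmax; apply/mem_set/BC_row.
Qed.

End Maximizer.

Theorem mainTheorem7 (R : realType) (w : nat -> R) (m : nat)
  (hm : (2 <= m)%N) (hw : forall i : nat, (1 <= i <= m)%N -> 0 < w i) :
  ((exists2 s : seq nat, admissible w m s & L1 w m = decomp_length w m s) /\
   (forall s : seq nat, admissible w m s -> decomp_length w m s <= L1 w m)) /\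
  (extremal w m <-> (forall s : seq nat, admissible w m s -> s = [::])).
Proof.
have [x fx mx] : exists2 x, feasible m x &
    forall z, feasible m z -> chain_value w m z <= chain_value w m x.
  by case: m hm {hw} => // n hn; apply: exists_maximizer.
set y := fun k => `|x k|.
have fy : feasible m y := feasible_norm fx.
have my z : feasible m z -> chain_value w m z <= chain_value w m y.
  by move/mx/le_trans; apply; apply: chain_value_le_norm.
have y0 k : 0 <= y k := normr_ge0 _.
have L1y := L1_maximizer hm hw fy my.
have Vy := chain_value_slack_cuts hm hw fy my y0.
have adm := slack_cuts_admissible hm hw fy my y0.
split; first split.
- by exists (slack_cuts m y); rewrite // L1y Vy.
- exact: decomp_length_le_L1.
split => [ext [//|i s] hs | triv].
  exfalso; move: ext; rewrite /extremal => ext.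
  by have := Lbare_lt_decomp_length hm hw hs isT; rewrite -ext ltNge decomp_length_le_L1.
by rewrite /extremal L1y Vy (triv _ adm) /decomp_length big_ord1.
Qed.
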